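(* Let $V$ be a finite nonempty set, $c\in\mathbb{R}^{P_V}$, $\hat x$ a maximally specific partial function on $P_V$, $U\subseteq V$, $\hat x'=\hat x|_{P_U}$, $c'=c|_{P_U}$, and $ij\in P_V\setminus\operatorname{dom}(\hat x)$. Define $y^+\in\{0,1\}^{P_U}$ by $y^+_e=1$ if $e\notin\operatorname{dom}(\hat x')$ and $c_e\ge0$; $y^+_e=0$ if $e\notin\operatorname{dom}(\hat x')$ and $c_e<0$; $y^+_e=\hat x_e$ if $e\in\operatorname{dom}(\hat x')$. Let $\tau\in\{\tau^{y^+}_{\mathrm{out}},\tau^{y^+}_{\mathrm{in}},\tau^{y^+}_{\mathrm{bd}}\}$ with corresponding sets $P'_{01},P'_{10}$ given in the context (with $y=y^+$). If $y^+\in X_U[\hat x']$, then for every $x\in X_V[\hat x]$: $$\sum_{pq\in\delta(U)}c_{pq}\big(x_{pq}-\tau(x)_{pq}\big)\le\sum_{pq\in P'_{01}}c^-_{pq}+\sum_{pq\in P'_{10}}c^+_{pq}.$$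
   Context: For a finite set $W$, $P_W=\{pq\in W^2\mid p\neq q\}$ and $X_W$ is the set of $x\in\{0,1\}^{P_W}$ with $x_{pq}+x_{qr}-x_{pr}\le1$ for all pairwise distinct $p,q,r\in W$. A partial function $\tilde x$ on $P_W$ is a map from $\operatorname{dom}(\tilde x)\subseteq P_W$ to $\{0,1\}$, $\tilde x^{-1}(b)$ the pairs mapped to $b$, $X_W[\tilde x]=\{x\in X_W\mid x_{pq}=\tilde x_{pq}\ \forall pq\in\operatorname{dom}(\tilde x)\}$; convention $\tilde x_{aa}=1$, $x_{aa}=1$, $y_{aa}=1$ for all $a$. A pair is decided if it has the same value in all completions; $\tilde x$ is maximally specific if $X_W[\tilde x]\ne\emptyset$ and the decided pairs are exactly $\operatorname{dom}(\tilde x)$. $\hat x|_{P_U}$ has domain $\operatorname{dom}(\hat x)\cap P_U$. $\delta(U)=(U\times(V\setminus U))\cup((V\setminus U)\times U)$. For $y\in X_U[\hat x']$ and $x\in X_V[\hat x]$: $\tau^y_{\mathrm{out}}(x)_{pq}$ equals $y_{pq}$ on $P_U$; $0$ on $U\times(V\setminus U)$; on $(V\setminus U)\times U$, $1$ if $\exists r\in U: x_{pr}=1\wedge y_{rq}=1$ and $0$ otherwise; $x_{pq}$ on $P_{V\setminus U}$. $\tau^y_{\mathrm{in}}(x)_{pq}$ equals $y_{pq}$ on $P_U$; $0$ on $(V\setminus U)\times U$; on $U\times(V\setminus U)$, $1$ if $\exists r\in U: y_{pr}=1\wedge x_{rq}=1$ and $0$ otherwise; $x_{pq}$ on $P_{V\setminus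 U}$. $\tau^y_{\mathrm{bd}}(x)_{pq}$ equals $y_{pq}$ on $P_U$; $0$ on $\delta(U)$; $x_{pq}$ on $P_{V\setminus U}$. Sets: for $\tau^y_{\mathrm{out}}$: $P'_{01}=\{pq\in(V\setminus U)\times U\mid\exists r\in U:\hat x_{pr}\ne0\wedge y_{rq}=1\}\setminus\hat x^{-1}(1)$, $P'_{10}=(U\times(V\setminus U))\setminus\hat x^{-1}(0)$; for $\tau^y_{\mathrm{in}}$: $P'_{01}=\{pq\in U\times(V\setminus U)\mid\exists r\in U: y_{pr}=1\wedge\hat x_{rq}\ne0\}\setminus\hat x^{-1}(1)$, $P'_{10}=((V\setminus U)\times U)\setminus\hat x^{-1}(0)$; for $\tau^y_{\mathrm{bd}}$: $P'_{01}=\emptyset$, $P'_{10}=\delta(U)\setminus\hat x^{-1}(0)$. For real $a$: $a^+=\max(a,0)$, $a^-=\max(-a,0)$. *)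

From mathcomp Require Import all_boot all_order all_algebra.
Set Implicit Arguments. Unset Strict Implicit. Unset Printing Implicit Defensive.
Import Order.TTheory GRing.Theory Num.Theory.
Local Open Scope ring_scope.

Section Defs.
Variable V : finType.

(* A 0/1 vector on pairs is represented by a function x : V -> V -> bool;
   only its values on off-diagonal pairs matter.  The convention x_aa = 1
   is implemented by the accessor [xv]. *)
Definition xv (x : V -> V -> bool) (p q : V) : bool := (p == q) || x p q.

(* A partial function on pairs: None = undefined.  Its domain is the set of
   off-diagonal pairs on which it is defined (values on the diagonal are
   ignored). *)
Definition pfun := V -> V -> option bool.

Definition in_dom (W : {set V}) (xt : pfun) (p q : V) : bool :=
  [&& p \in W, q \in W, p != q & xt p q != None].

Definition inX (W : {set V}) (x : V -> V -> bool) : Prop :=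
  forall p q r, p \in W -> q \in W -> r \in W ->
    p != q -> q != r -> p != r ->
    ((x p q : nat)%:Z + (x q r : nat)%:Z - (x p r : nat)%:Z <= 1)%R.

Definition agree (W : {set V}) (xt : pfun) (x : V -> V -> bool) : Prop :=
  forall p q b, p \in W -> q \in W -> p != q -> xt p q = Some b -> x p q = b.

Definition inXt (W : {set V}) (xt : pfun) (x : V -> V -> bool) : Prop :=
  inX W x /\ agree W xt x.

Definition decided (W : {set V}) (xt : pfun) (p q : V) : Prop :=
  exists b : bool, forall x, inXt W xt x -> x p q = b.

Definition max_specific (W : {set V}) (xt : pfun) : Prop :=
  (exists x, inXt W xt x) /\
  (forall p q, p \in W -> q \in W -> p != q ->
     (decided W xt p q <-> in_dom W xt p q)).

Definition yplus (R : realFieldType) (xh : pfun) (c : V -> V -> R)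
  : V -> V -> bool :=
  fun p q => match xh p q with Some b => b | None => 0 <= c p q end.

Inductive tau_kind := TOut | TIn | TBd.

Definition delta (U : {set V}) (p q : V) : bool :=
  ((p \in U) && (q \notin U)) || ((p \notin U) && (q \in U)).

Definition tau (k : tau_kind) (U : {set V}) (y x : V -> V -> bool)
  (p q : V) : bool :=
  if (p \in U) && (q \in U) then y p q
  else if (p \notin U) && (q \notin U) then x p q
  else match k with
  | TOut => if (p \notin U) && (q \in U) then
              [exists r in U, xv x p r && xv y r q] else false
  | TIn => if (p \in U) && (q \notin U) then
              [exists r in U, xv y p r && xv x r q] else false
  | TBd => false
  end.

Definition P01 (k : tau_kind) (U : {set V}) (y : V -> V -> bool) (xh : pfun)
  (p q : V) : bool :=
  match k with
  | TOut => [&& p \notin U, q \in U,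
               [exists r in U, (xh p r != Some false) && xv y r q]
             & xh p q != Some true]
  | TIn => [&& p \in U, q \notin U,
               [exists r in U, xv y p r && (xh r q != Some false)]
             & xh p q != Some true]
  | TBd => false
  end.

Definition P10 (k : tau_kind) (U : {set V}) (xh : pfun) (p q : V) : bool :=
  match k with
  | TOut => [&& p \in U, q \notin U & xh p q != Some false]
  | TIn => [&& p \notin U, q \in U & xh p q != Some false]
  | TBd => delta U p q && (xh p q != Some false)
  end.

Definition negp (R : realFieldType) (a : R) : R := Num.max (- a) 0.
Definition posp (R : realFieldType) (a : R) : R := Num.max a 0.
End Defs.

(* The bound holds pair by pair.  On a pair pq of delta(U), x and tau(x) can
   only differ in two ways: tau raises x_pq from 0 to 1, which costs at most
   c^-_pq and happens only on P'_01, or tau lowers x_pq from 1 to 0, which costs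
   at most c^+_pq and happens only on P'_10.  Both facts use nothing but the
   agreement of x with x^. *)

From mathcomp Require Import all_boot all_order all_algebra.
From mathcomp Require Import lra.
Set Implicit Arguments. Unset Strict Implicit. Unset Printing Implicit Defensive.
Import Order.TTheory GRing.Theory Num.Theory.
Local Open Scope ring_scope.

Section PositiveNegativeParts.
Variable R : realFieldType.
Implicit Types a c : R.

Lemma negp_ge0 a : 0 <= negp a.
Proof. by rewrite /negp le_max lexx orbT. Qed.

Lemma posp_ge0 a : 0 <= posp a.
Proof. by rewrite /posp le_max lexx orbT. Qed.

Lemma oppr_le_negp a : - a <= negp a.
Proof. by rewrite /negp le_max lexx. Qed.

Lemma le_posp a : a <= posp a.
Proof. by rewrite /posp le_max lexx. Qed.

Lemma mul_bool_diff_le c (a b P Q : bool) :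
  (~~ a && b ==> P) -> (a && ~~ b ==> Q) ->
  c * (a%:R - b%:R) <= (if P then negp c else 0) + (if Q then posp c else 0).
Proof.
have := negp_ge0 c; have := posp_ge0 c.
have := oppr_le_negp c; have := le_posp c.
by case: a; case: b; case: P; case: Q => //=; rewrite ?subrr ?subr0 ?sub0r;
  lra.
Qed.

End PositiveNegativeParts.

Section TauChanges.
Variables (V : finType) (U : {set V}) (xh : pfun V) (y x : V -> V -> bool).
Hypothesis x_agree : agree [set: V] xh x.

Lemma delta_neq p q : delta U p q -> p != q.
Proof. by rewrite /delta; apply: contraTneq => ->; rewrite andbN andNb. Qed.

Lemma agree_neq_Some_false p q : p != q -> x p q -> xh p q != Some false.
Proof.
move=> npq xpq; apply/eqP => /x_agree.
by rewrite !in_setT xpq => /(_ isT isT npq).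
Qed.

Lemma agree_neq_Some_true p q : p != q -> ~~ x p q -> xh p q != Some true.
Proof.
move=> npq /negbTE xpq; apply/eqP => /x_agree.
by rewrite !in_setT xpq => /(_ isT isT npq).
Qed.

Lemma tau_raise_P01 k p q :
  delta U p q -> ~~ x p q -> tau k U y x p q -> P01 k U y xh p q.
Proof.
move=> dpq xpq; have npq := delta_neq dpq.
have xhpq := agree_neq_Some_true npq xpq.
move: dpq; rewrite /delta /tau /P01.
case: k; case pU: (p \in U); case qU: (q \in U) => //= _.
- case/exists_inP => r rU /andP[xpr yrq]; rewrite xhpq andbT.
  have npr : p != r by apply: contraFneq pU => ->.
  apply/exists_inP; exists r => //; rewrite yrq andbT.
  by move: xpr; rewrite /xv (negbTE npr); apply: agree_neq_Some_false.
- case/exists_inP => r rU /andP[ypr xrq]; rewrite xhpq andbT.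
  have nrq : r != q by apply: contraFneq qU => <-.
  apply/exists_inP; exists r => //; rewrite ypr /=.
  by move: xrq; rewrite /xv (negbTE nrq); apply: agree_neq_Some_false.
Qed.

Lemma tau_lower_P10 k p q :
  delta U p q -> x p q -> ~~ tau k U y x p q -> P10 k U xh p q.
Proof.
move=> dpq xpq; have xhpq := agree_neq_Some_false (delta_neq dpq) xpq.
move: dpq; rewrite /tau /P10; case: k => dpq; last by rewrite dpq xhpq.
all: move: dpq; rewrite /delta.
all: case pU: (p \in U); case qU: (q \in U) => //= _ /exists_inP[].
(* A lifted entry never drops: r = q (resp. r = p) witnesses tau(x)_pq = 1. *)
- by exists q; rewrite // /xv xpq eqxx orbT.
- by exists p; rewrite // /xv xpq eqxx orbT.
Qed.

End TauChanges.

Theorem corollary7p6 (R : realFieldType) (V : finType) (c : V -> V -> R)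
  (xh : pfun V) (U : {set V}) (i j : V) (k : tau_kind) :
  (0 < #|V|)%N ->
  max_specific [set: V] xh ->
  i != j -> xh i j = None ->
  inXt U xh (yplus xh c) ->
  forall x : V -> V -> bool, inXt [set: V] xh x ->
    \sum_(pq : V * V | delta U pq.1 pq.2)
        c pq.1 pq.2 * ((x pq.1 pq.2 : nat)%:R
                       - (tau k U (yplus xh c) x pq.1 pq.2 : nat)%:R)
    <= \sum_(pq : V * V | P01 k U (yplus xh c) xh pq.1 pq.2) negp (c pq.1 pq.2)
     + \sum_(pq : V * V | P10 k U xh pq.1 pq.2) posp (c pq.1 pq.2).
Proof.
move=> _ _ _ _ _ x [_ x_agree].
rewrite big_mkcond [X in _ <= X + _]big_mkcond [X in _ <= _ + X]big_mkcond.
rewrite -big_split /=; apply: ler_sum => -[p q] _ /=.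
case: ifP => dpq; last first.
  by apply: addr_ge0; case: ifP => _; rewrite ?negp_ge0 ?posp_ge0.
apply: mul_bool_diff_le; apply/implyP => /andP[].
- exact: tau_raise_P01.
- exact: tau_lower_P10.
Qed.
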